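(* Let $f \in L^\infty(0,L)$. Let $u_0 \in V$ satisfy $a_0(u_0,v) = \int_0^L f v\,dx$ for all $v \in V$, and for $n \ge 1$ let $u_n \in V$ satisfy $\sum_{j=0}^{n} a_j(u_{n-j}, v) = 0$ for all $v \in V$. Then for every $m \ge 0$ there is a constant $\tilde C_m$, depending only on $m$ and $L$, such that $$|u_m|_{H^1} \le \tilde C_m\, \|\psi\|_\infty^m\, \|f\|_\infty.$$
   Context: Let $L>0$ and let $\kappa:(0,L)\to\mathbb{R}$ be measurable with $0<\kappa_{\min}\le \kappa(x)\le \kappa_{\max}$ for a.e. $x$; set $\psi = \log \kappa \in L^\infty(0,L)$, with $\|\cdot\|_\infty$ the essential supremum norm. $V = \{ v \in H^1(0,L) : v(0) = 0\}$. For integers $j \ge 0$ and $u,v \in V$, define $a_j(u,v) = \frac{1}{j!}\int_0^L \psi(x)^j\, u'(x)\, v'(x)\,dx$. The $H^1$-seminorm is $|v|_{H^1} = \left(\int_0^L |v'|^2\,dx\right)^{1/2}$. *)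

From HB Require Import structures.
From mathcomp Require Import all_boot all_order all_algebra.
From mathcomp Require Import all_classical all_reals all_analysis ess_sup_inf.
Set Implicit Arguments. Unset Strict Implicit. Unset Printing Implicit Defensive.
Import Order.TTheory GRing.Theory Num.Theory.
Local Open Scope classical_set_scope.
Local Open Scope ring_scope.

Section Defs.
Variable R : realType.
Local Notation mu := (@lebesgue_measure R).

Definition L2on (L : R) (g : R -> R) : Prop :=
  measurable_fun `]0, L[ g /\ mu.-integrable `]0, L[ (fun x => (g x ^+ 2)%:E).

Definition Linf_norm (L : R) (g : R -> R) : \bar R :=
  ess_sup mu (fun x => (`|g x| * \1_(`]0, L[ : set R) x)%:E).

Definition Linf (L : R) (g : R -> R) : Prop :=
  measurable_fun `]0, L[ g /\ (Linf_norm L g < +oo)%E.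

(* Membership of v in V = {v in H^1(0,L) : v(0) = 0}, given through its
   absolutely continuous representative v together with its (weak) derivative
   dv in L^2(0,L):  v(x) = int_0^x dv  on [0,L]. *)
Definition inV (L : R) (v dv : R -> R) : Prop :=
  L2on L dv /\ forall x, 0 <= x <= L -> v x = Rintegral mu `[0, x] dv.

Definition a_form (L : R) (psi : R -> R) (j : nat) (du dv : R -> R) : R :=
  (j`!%:R)^-1 * Rintegral mu `]0, L[ (fun x => psi x ^+ j * du x * dv x).

Definition H1semi (L : R) (dv : R -> R) : R :=
  Num.sqrt (Rintegral mu `]0, L[ (fun x => dv x ^+ 2)).

End Defs.

From HB Require Import structures.
From mathcomp Require Import all_boot all_order all_algebra.
From mathcomp Require Import all_classical all_reals all_analysis ess_sup_inf.
From mathcomp Require Import ring lra measurable_realfun.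
Import Order.TTheory GRing.Theory Num.Theory.
Local Open Scope classical_set_scope.
Local Open Scope ring_scope.

(* Testing the equation defining u_m with v = u_m isolates
   a_0(u_m, u_m) = |u_m|_{H^1}^2.  For m = 0 the other side is int f u_0, and
   |u_0(x)| <= int |u_0'| <= sqrt L |u_0|_{H^1} gives
   |u_0|_{H^1} <= L sqrt L ||f||_oo.  For m >= 1, Cauchy-Schwarz and
   |psi| <= ||psi||_oo bound |a_j(u_(m-j), u_m)| by
   ||psi||_oo^j |u_(m-j)|_{H^1} |u_m|_{H^1} (discarding 1/j! <= 1), so
   |u_m|_{H^1} <= sum_(j=1..m) ||psi||_oo^j |u_(m-j)|_{H^1}; this convolution
   recursion is dominated by C_m = L sqrt L 2^m. *)

Lemma le_sqrtM_of_scaled_amgm {R : rcfType} (X A B : R) :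
  0 <= X -> 0 <= A -> 0 <= B ->
  (forall t, 0 < t -> 2 * t * X <= t ^+ 2 * A + B) ->
  X <= Num.sqrt A * Num.sqrt B.
Proof.
move=> X0 A0 B0 amgm.
rewrite -sqrtrM // -(ger0_norm X0) -sqrtr_sqr ler_sqrt ?mulr_ge0 //.
have [->|Xn0] := eqVneq X 0; first by rewrite expr0n mulr_ge0.
have Xp : 0 < X by rewrite lt_neqAle eq_sym Xn0.
have [A_eq0|An0] := eqVneq A 0.
  have := amgm ((B + 1) / X) (divr_gt0 (ltr_wpDl B0 ltr01) Xp).
  rewrite A_eq0 mulr0 add0r -mulrA divfK //; lra.
have Ap : 0 < A by rewrite lt_neqAle eq_sym An0.
have := amgm (X / A) (divr_gt0 Xp Ap).
have -> : (X / A) ^+ 2 * A = X / A * X by rewrite expr2 -mulrA divfK // mulrC.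
move=> le_XB; have {}le_XB : X / A * X <= B by lra.
have -> : X ^+ 2 = A * (X / A * X) by field.
exact: ler_wpM2l.
Qed.

Lemma amgm_normrM {R : realDomainType} (t a b : R) :
  0 <= t -> 2 * t * `|a * b| <= t ^+ 2 * a ^+ 2 + b ^+ 2.
Proof.
move=> t0; rewrite normrM -(real_normK (num_real a)) -(real_normK (num_real b)).
have := sqr_ge0 (t * `|a| - `|b|); nra.
Qed.

Lemma le_of_sqr_le_mul {R : realDomainType} (N c : R) :
  0 <= c -> N ^+ 2 <= c * N -> N <= c.
Proof. by move=> c0 le_N2; nra. Qed.

Lemma sum_expr2_le {R : realDomainType} (n : nat) :
  \sum_(i < n) (2 : R) ^+ (n - i.+1) <= 2 ^+ n.
Proof.
elim: n => [|n IH]; first by rewrite big_ord0 expr0 ler01.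
rewrite big_ord_recl subn1 /=.
under eq_bigr => i _ do rewrite /bump /= add1n subSS.
by rewrite exprS mulr2n mulrDl mul1r lerD2l.
Qed.

Lemma convolution_recursion_bound {R : realDomainType} (N : nat -> R) {C P F : R} :
  0 <= C -> 0 <= P -> 0 <= F ->
  N 0%N <= C * F ->
  (forall n, N n.+1 <= \sum_(i < n.+1) P ^+ i.+1 * N (n - i)%N) ->
  forall m, N m <= C * 2 ^+ m * P ^+ m * F.
Proof.
move=> C0 P0 F0 N0 Nrec m; elim/ltn_ind: m => -[_|n IH].
  by rewrite !expr0 mulr1 mulr1.
apply: le_trans (Nrec n) _.
have c0 : 0 <= C * P ^+ n.+1 * F by rewrite !mulr_ge0 ?exprn_ge0.
have termwise : forall i : 'I_n.+1,
    P ^+ i.+1 * N (n - i)%N <= C * P ^+ n.+1 * F * 2 ^+ (n.+1 - i.+1).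
  move=> i; have le_in : (i <= n)%N by rewrite -ltnS.
  have IHi := IH _ (leq_ltn_trans (leq_subr i n) (ltnSn n)).
  apply: le_trans (ler_wpM2l (exprn_ge0 _ P0) IHi) _.
  have Pe : P ^+ i.+1 * P ^+ (n - i) = P ^+ n.+1 by rewrite -exprD addSn subnKC.
  rewrite subSS -Pe; nra.
apply: le_trans (ler_sum _ (fun i _ => termwise i)) _.
rewrite -mulr_sumr; apply: le_trans (ler_wpM2l c0 (sum_expr2_le _)) _.
nra.
Qed.

Lemma normr_ln_le {R : realType} (a b y : R) :
  0 < a -> a <= y <= b -> `|ln y| <= `|ln a| + `|ln b|.
Proof.
move=> a_gt0 /andP[ay yb].
have y_gt0 : 0 < y by apply: lt_le_trans ay.
have lna : ln a <= ln y by rewrite ler_ln // posrE (lt_le_trans a_gt0).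
have lnb : ln y <= ln b by rewrite ler_ln // posrE (lt_le_trans y_gt0).
rewrite ler_norml; apply/andP; split.
- by have := ler_norm (- ln a); rewrite normrN; have := normr_ge0 (ln b); lra.
- by have := ler_norm (ln b); have := normr_ge0 (ln a); lra.
Qed.

(* [measurable_itv] is stated for the Borel display of [R]; [lebesgue_measure]
   lives on [measurableTypeR R], whose display does not unify with it. *)
Lemma lebesgue_measurable_itv {R : realType} (i : interval R) :
  @measurable _ (measurableTypeR R) [set` i].
Proof. exact: measurable_itv. Qed.

Section LebesgueIntegralBounds.
Context {R : realType}.
Local Notation mu := (@lebesgue_measure R).
Implicit Types (D : set (measurableTypeR R)) (g h : R -> R).

Lemma integrable_normrM {D g h} : measurable D ->
  measurable_fun D g -> measurable_fun D h ->
  mu.-integrable D (EFin \o (fun x => g x ^+ 2)) ->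
  mu.-integrable D (EFin \o (fun x => h x ^+ 2)) ->
  mu.-integrable D (EFin \o (fun x => `|g x * h x|)).
Proof.
move=> mD mg mh ig ih; apply: (le_integrable mD _ _ (integrableD mD ig ih)).
  by apply/measurable_EFinP; apply: measurableT_comp => //; exact: measurable_funM.
move=> x _ /=; rewrite lee_fin normr_id [X in _ <= X]ger0_norm ?addr_ge0 ?sqr_ge0 //.
have := @amgm_normrM _ 1 (g x) (h x) ler01.
rewrite expr1n mul1r; have := normr_ge0 (g x * h x); lra.
Qed.

Lemma Rintegral_normrM_le D g h : measurable D ->
  measurable_fun D g -> measurable_fun D h ->
  mu.-integrable D (EFin \o (fun x => g x ^+ 2)) ->
  mu.-integrable D (EFin \o (fun x => h x ^+ 2)) ->
  \int[mu]_(x in D) `|g x * h x| <=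
    Num.sqrt (\int[mu]_(x in D) g x ^+ 2) * Num.sqrt (\int[mu]_(x in D) h x ^+ 2).
Proof.
move=> mD mg mh ig ih.
apply: le_sqrtM_of_scaled_amgm; do ?by apply: Rintegral_ge0 => *; rewrite ?sqr_ge0.
move=> t t0.
have igh := integrable_normrM mD mg mh ig ih.
have itg : mu.-integrable D (EFin \o (fun x => t ^+ 2 * g x ^+ 2)).
  exact: (integrableZl mD (t ^+ 2) ig).
rewrite -RintegralZl // -RintegralZl // -RintegralD //.
apply: le_Rintegral => //; first exact: (integrableZl mD (2 * t) igh).
  exact: (integrableD mD itg ih).
by move=> x _; exact: amgm_normrM (ltW t0).
Qed.

Lemma ae_le_normr_Rintegral D g h : measurable D -> measurable_fun D g ->
  mu.-integrable D (EFin \o h) -> (forall x, D x -> 0 <= h x) ->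
  {ae mu, forall x, D x -> `|g x| <= h x} ->
  `|\int[mu]_(x in D) g x| <= \int[mu]_(x in D) h x.
Proof.
move=> mD mg ih h0 ae_gh.
have le_int : (\int[mu]_(x in D) (`|g x|)%:E <= \int[mu]_(x in D) (h x)%:E)%E.
  apply: (@ae_ge0_le_integral _ _ _ mu D mD).
  - by move=> x _; rewrite lee_fin.
  - by apply/measurable_EFinP; exact: measurableT_comp.
  - by move=> x Dx; rewrite lee_fin h0.
  - exact: measurable_int ih.
  - have ae_filter := ae_filter_ringOfSetsType mu.
    by apply: filterS ae_gh => x gh Dx; rewrite lee_fin gh.
have ig : mu.-integrable D (EFin \o g).
  apply/integrableP; split; first exact/measurable_EFinP.
  exact: (le_lt_trans le_int (integrable_lty mD ih)).
apply: le_trans (le_normr_Rintegral mD ig) _.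
rewrite -lee_fin /Rintegral !fineK //.
  exact: (integrable_fin_num mD ih).
exact: (integrable_fin_num mD (integrable_norm ig)).
Qed.

End LebesgueIntegralBounds.

Section OpenInterval.
Context {R : realType} {L : R}.
Hypothesis L_gt0 : 0 < L.
Local Notation mu := (@lebesgue_measure R).
Implicit Types (k F : R) (f g v dv : R -> R).
Let measurable_oo0 := lebesgue_measurable_itv `]0, L[%R.

Lemma lebesgue_measure_oo0 : mu `]0, L[ = L%:E.
Proof. by rewrite lebesgue_measure_itv /= lte_fin L_gt0 -EFinB subr0. Qed.

Lemma Rintegral_cst_oo0 k : \int[mu]_(x in `]0, L[) k = k * L.
Proof. by rewrite Rintegral_cst //; have /= -> := lebesgue_measure_oo0. Qed.

Lemma integrable_cst_oo0 k : mu.-integrable `]0, L[ (EFin \o cst k).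
Proof.
apply: measurable_bounded_integrable => //; last exact: bounded_cst.
by have /= -> := lebesgue_measure_oo0; exact: ltry.
Qed.

Lemma L2on_integrable {g} : L2on L g -> mu.-integrable `]0, L[ (EFin \o g).
Proof.
move=> [mg ig2]; have ig21 := integrableD measurable_oo0 ig2 (integrable_cst_oo0 1).
apply: (le_integrable measurable_oo0 _ _ ig21); first exact/measurable_EFinP.
move=> x _ /=; rewrite lee_fin [X in _ <= X]ger0_norm ?addr_ge0 ?sqr_ge0 //.
rewrite -(real_normK (num_real (g x))); have := normr_ge0 (g x); nra.
Qed.

Lemma L2on_integrable_cc {g} : L2on L g -> mu.-integrable `[0, L] (EFin \o g).
Proof.
move=> g2; have /integrableP[_ fin_g] := L2on_integrable g2.
apply/integrableP; split.
  by apply/measurable_EFinP/measurable_fun_itv_obnd_cbndP/measurable_fun_itv_bndo_bndcP; case: g2.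
rewrite (integral_itv_bndoo true false) //.
by apply/measurable_EFinP; apply: measurableT_comp => //; case: g2.
Qed.

Lemma inV_measurable {v dv} : inV L v dv -> measurable_fun `]0, L[ v.
Proof.
move=> [dv2 v_eq].
have cont := parameterized_integral_continuous (ltW L_gt0) (L2on_integrable_cc dv2).
have : measurable_fun `[0, L] (fun x => parameterized_integral mu 0 x dv).
  exact: subspace_continuous_measurable_fun (lebesgue_measurable_itv _) cont.
have sub_oo_cc : `]0, L[ `<=` `[0, L] by apply/subset_itvP/subset_itv_oo_cc.
move=> /(measurable_funS (measurable_itv _) sub_oo_cc).
apply: eq_measurable_fun => x; rewrite inE /= in_itv /= => /andP[x0 xL].
by rewrite /parameterized_integral v_eq ?ltW.
Qed.

Lemma inV_normr_le v dv x : inV L v dv -> 0 < x < L ->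
  `|v x| <= \int[mu]_(t in `]0, L[) `|dv t|.
Proof.
move=> [dv2 v_eq] /andP[x0 xL]; rewrite v_eq ?(ltW x0) ?(ltW xL) //.
have idv := L2on_integrable_cc dv2.
have sub_x : `[0, x] `<=` `[0, L] by apply/subset_itvP/subset_itvl; rewrite bnd_simp ltW.
have idvx := integrableS (lebesgue_measurable_itv _) (lebesgue_measurable_itv _) sub_x idv.
apply: le_trans (le_normr_Rintegral (lebesgue_measurable_itv _) idvx) _.
have -> : \int[mu]_(t in `]0, L[) `|dv t| = \int[mu]_(t in `[0, L]) `|dv t|.
  rewrite /Rintegral (integral_itv_bndoo true false) //.
  by apply/measurable_EFinP; apply: measurableT_comp => //; case: dv2.
rewrite -lee_fin /Rintegral !fineK.
- apply: ge0_subset_integral => //; try exact: lebesgue_measurable_itv.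
  exact: measurable_int (integrable_norm idv).
- exact: (integrable_fin_num (lebesgue_measurable_itv _) (integrable_norm idv)).
- exact: (integrable_fin_num (lebesgue_measurable_itv _) (integrable_norm idvx)).
Qed.

Lemma Rintegral_normr_le_H1semi {g} : L2on L g ->
  \int[mu]_(x in `]0, L[) `|g x| <= Num.sqrt L * H1semi L g.
Proof.
move=> [mg ig2].
have := Rintegral_normrM_le `]0, L[ (cst 1) g measurable_oo0 (measurable_cst _) mg
  (integrable_cst_oo0 (1 ^+ 2)) ig2.
have -> : \int[mu]_(x in `]0, L[) cst 1 x ^+ 2 = L.
  by rewrite /cst expr1n Rintegral_cst_oo0 mul1r.
by under eq_Rintegral do rewrite /= mul1r.
Qed.

Lemma normr_Rintegral_mul_le {F f v dv} : 0 <= F -> measurable_fun `]0, L[ f ->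
  {ae mu, forall x, `]0, L[%classic x -> `|f x| <= F} -> inV L v dv ->
  `|\int[mu]_(x in `]0, L[) (f x * v x)| <= L * Num.sqrt L * F * H1semi L dv.
Proof.
move=> F0 mf f_le vV.
set M := \int[mu]_(t in `]0, L[) `|dv t|.
have M_le : M <= Num.sqrt L * H1semi L dv := Rintegral_normr_le_H1semi vV.1.
have M0 : 0 <= M by apply: Rintegral_ge0.
apply: le_trans (ae_le_normr_Rintegral _ _ (cst (F * M)) measurable_oo0 _
  (integrable_cst_oo0 _) _ _) _.
- exact: measurable_funM mf (inV_measurable vV).
- by move=> x _; rewrite /= mulr_ge0.
- have ae_filter := ae_filter_ringOfSetsType mu.
  apply: filterS f_le => x fx Dx; rewrite normrM /=.
  by apply: ler_pM => //; [exact: fx | exact: inV_normr_le].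
rewrite Rintegral_cst_oo0.
have := mulr_ge0 F0 (ltW L_gt0); nra.
Qed.

Lemma H1semi_le_of_source {F f v dv} : 0 <= F -> measurable_fun `]0, L[ f ->
  {ae mu, forall x, `]0, L[%classic x -> `|f x| <= F} -> inV L v dv ->
  H1semi L dv ^+ 2 = \int[mu]_(x in `]0, L[) (f x * v x) ->
  H1semi L dv <= L * Num.sqrt L * F.
Proof.
move=> F0 mf f_le vV energy; apply: le_of_sqr_le_mul.
  by rewrite !mulr_ge0 ?sqrtr_ge0 // ltW.
rewrite energy; apply: le_trans (ler_norm _) _.
exact: normr_Rintegral_mul_le.
Qed.

End OpenInterval.

Section EssentialSupremum.
Context {R : realType}.
Local Notation mu := (@lebesgue_measure R).
Implicit Types (L K : R) (g : R -> R).

Lemma lebesgue_measure_setT_gt0 : (0 < mu [set: R])%E.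
Proof.
apply: (@lt_le_trans _ _ (mu `]0, 1[%classic)); last first.
  by apply: le_measure; rewrite ?inE //; exact: lebesgue_measurable_itv.
by have /= -> := @lebesgue_measure_oo0 R 1 ltr01; rewrite lte_fin ltr01.
Qed.

Lemma Linf_norm_ge0 L g : (0 <= Linf_norm L g)%E.
Proof.
apply: ess_sup_ger; first exact: lebesgue_measure_setT_gt0.
by move=> x; rewrite lee_fin mulr_ge0 // indicE.
Qed.

Lemma ae_normr_le_Linf_norm {L g} : (Linf_norm L g < +oo)%E ->
  {ae mu, forall x, `]0, L[%classic x -> `|g x| <= fine (Linf_norm L g)}.
Proof.
move=> g_fin; have fin_g : Linf_norm L g \is a fin_num.
  by rewrite ge0_fin_numE ?Linf_norm_ge0.
have ae_filter := ae_filter_ringOfSetsType mu.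
apply: filterS (ess_sup_ge mu (fun x => (`|g x| * \1_(`]0, L[%classic : set R) x)%:E)).
move=> x gx Dx; rewrite -lee_fin fineK //.
by move: gx; rewrite indicE mem_set // mulr1.
Qed.

Lemma Linf_norm_le L g K : 0 <= K ->
  {ae mu, forall x, x \in `]0, L[ -> `|g x| <= K} -> (Linf_norm L g <= K%:E)%E.
Proof.
move=> K0 g_le; rewrite /Linf_norm -(ess_sup_cst K%:E lebesgue_measure_setT_gt0).
have ae_filter := ae_filter_ringOfSetsType mu.
apply: le_ess_sup; apply: filterS g_le => x gx.
rewrite /= lee_fin indicE; case: (boolP (x \in _)) => [x_in|_].
  by rewrite mulr1 (gx (set_mem x_in)).
by rewrite mulr0.
Qed.

End EssentialSupremum.

Section BilinearForms.
Context {R : realType} {L : R}.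
Local Notation mu := (@lebesgue_measure R).
Implicit Types (P : R) (psi g h : R -> R).

Lemma a_form0_diag psi g : a_form L psi 0 g g = H1semi L g ^+ 2.
Proof.
rewrite /a_form /H1semi fact0 invr1 mul1r sqr_sqrtr; last first.
  by apply: Rintegral_ge0 => x _; exact: sqr_ge0.
by apply: eq_Rintegral => x _; rewrite expr0 mul1r expr2.
Qed.

Lemma normr_a_form_le P psi j g h : 0 <= P -> measurable_fun `]0, L[ psi ->
  {ae mu, forall x, `]0, L[%classic x -> `|psi x| <= P} ->
  L2on L g -> L2on L h ->
  `|a_form L psi j g h| <= P ^+ j * (H1semi L g * H1semi L h).
Proof.
move=> P0 mpsi psi_le [mg ig2] [mh ih2].
have mD := lebesgue_measurable_itv `]0, L[%R.
have igh := integrable_normrM mD mg mh ig2 ih2.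
have weighted : `|\int[mu]_(x in `]0, L[) (psi x ^+ j * g x * h x)|
    <= \int[mu]_(x in `]0, L[) (P ^+ j * `|g x * h x|).
  apply: ae_le_normr_Rintegral => //.
  - by apply: measurable_funM => //; apply: measurable_funM => //; exact: measurable_funX.
  - exact: (integrableZl mD (P ^+ j) igh).
  - by move=> x _; rewrite mulr_ge0 ?exprn_ge0.
  - have ae_filter := ae_filter_ringOfSetsType mu.
    apply: filterS psi_le => x psix Dx.
    rewrite -mulrA normrM normrX; apply: ler_wpM2r => //.
    by apply: lerXn2r; rewrite ?nnegrE ?psix.
have inv_fact_le1 : (j`!%:R : R)^-1 <= 1.
  by rewrite invf_le1 ?ltr0n ?fact_gt0 // ler1n fact_gt0.
rewrite /a_form normrM ger0_norm ?invr_ge0 ?ler0n //.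
apply: le_trans (ler_piMl (normr_ge0 _) inv_fact_le1) _.
apply: le_trans weighted _; rewrite RintegralZl //.
by apply: ler_wpM2l; [exact: exprn_ge0 | exact: Rintegral_normrM_le].
Qed.

Lemma H1semi_le_convolution {P psi} {dw : nat -> R -> R} {n} :
  0 <= P -> measurable_fun `]0, L[ psi ->
  {ae mu, forall x, `]0, L[%classic x -> `|psi x| <= P} ->
  (forall k, L2on L (dw k)) ->
  \sum_(j < n.+2) a_form L psi j (dw (n.+1 - j)%N) (dw n.+1) = 0 ->
  H1semi L (dw n.+1) <= \sum_(i < n.+1) P ^+ i.+1 * H1semi L (dw (n - i)%N).
Proof.
move=> P0 mpsi psi_le dw2; rewrite big_ord_recl subn0 a_form0_diag.
move=> /eqP; rewrite addr_eq0 => /eqP energy.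
apply: le_of_sqr_le_mul.
  by apply: sumr_ge0 => i _; rewrite mulr_ge0 ?exprn_ge0 ?sqrtr_ge0.
rewrite energy mulr_suml; apply: le_trans (ler_norm _) _; rewrite normrN.
apply: le_trans (ler_norm_sum _ _ _) _; apply: ler_sum => i _.
rewrite lift0 subSS -mulrA.
exact: normr_a_form_le.
Qed.

End BilinearForms.

Theorem lemma5 (R : realType) (L : R) (hL : 0 < L) :
  exists Ct : nat -> R,
  forall (kappa : R -> R) (kmin kmax : R) (f : R -> R)
         (u du : nat -> R -> R),
    0 < kmin ->
    measurable_fun `]0, L[ kappa ->
    {ae @lebesgue_measure R, forall x, x \in `]0, L[ -> kmin <= kappa x <= kmax} ->
    Linf L f ->
    (forall n, inV L (u n) (du n)) ->
    (forall v dv, inV L v dv ->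
       a_form L (@ln R \o kappa) 0 (du 0%N) dv
       = Rintegral (@lebesgue_measure R) `]0, L[ (fun x => f x * v x)) ->
    (forall n, (1 <= n)%N -> forall v dv, inV L v dv ->
       \sum_(j < n.+1) a_form L (@ln R \o kappa) j (du (n - j)%N) dv = 0) ->
    forall m : nat,
      H1semi L (du m)
      <= Ct m * (fine (Linf_norm L (@ln R \o kappa))) ^+ m * fine (Linf_norm L f).
Proof.
exists (fun m => L * Num.sqrt L * 2 ^+ m).
move=> kappa kmin kmax f u du kmin_gt0 mkappa kappa_bnd [mf f_fin] uV eq0 eqn.
set psi := @ln R \o kappa.
have psi_fin : (Linf_norm L psi < +oo)%E.
  apply: le_lt_trans (Linf_norm_le L psi (`|ln kmin| + `|ln kmax|) _ _) (ltry _).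
    by rewrite addr_ge0.
  have ae_filter := ae_filter_ringOfSetsType (@lebesgue_measure R).
  by apply: filterS kappa_bnd => x kx /kx; exact: normr_ln_le.
have P0 := fine_ge0 (Linf_norm_ge0 L psi).
have F0 := fine_ge0 (Linf_norm_ge0 L f).
have psi_le := ae_normr_le_Linf_norm psi_fin.
have f_le := ae_normr_le_Linf_norm f_fin.
have mpsi : measurable_fun `]0, L[ psi := measurableT_comp (@measurable_ln R) mkappa.
have C0 : 0 <= L * Num.sqrt L by rewrite mulr_ge0 ?sqrtr_ge0 ?ltW.
apply: (convolution_recursion_bound (fun k => H1semi L (du k)) C0 P0 F0).
- apply: (H1semi_le_of_source hL F0 mf f_le (uV 0%N)).
  by rewrite -(a_form0_diag psi) (eq0 _ _ (uV 0%N)).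
- move=> n; apply: (H1semi_le_convolution P0 mpsi psi_le (fun k => (uV k).1)).
  exact: eqn.
Qed.
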